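(* Let $\mathcal{G}$ be a simple temporal clique and let $\mathcal{T}^+=(V,E^+_T)$ be obtained by the backward construction. For every vertex $v$ that is not a collector, there exists a vertex $v'$ in the same out-tree of $\mathcal{T}^+$ as $v$ (collector or not) and a journey of length at most two from $v'$ to $v$ whose first edge is $e^+(v')$.
   Context: A simple temporal clique is a pair $\mathcal{G}=(G,\lambda)$ where $G=(V,E)$ is the complete graph on a finite vertex set $V$ and $\lambda:E\to\mathbb{N}$ assigns to each edge a single integer label such that any two distinct edges sharing an endpoint have different labels; the label of an arc $(x,y)$ is $\lambda(\{x,y\})$. A journey from $x$ to $y$ is a sequence of vertices $x=u_0,\dots,u_k=y$ ($k\ge1$) with $\lambda(\{u_{i-1},u_i\})<\lambda(\{u_i,u_{i+1}\})$ for $1\le i<k$; its length is $k$ and its first edge is $\{u_0,u_1\}$. For a vertex $v$, $e^+(v)$ is the edge incident to $v$ with largest label. Backward construction: let $E^+$ be the set of arcs $(v,u)$ with $\{u,v\}=e^+(v)$, except that if $e^+(u)=e^+(v)=\{u,v\}$ only one of the two arcs $(u,v),(v,u)$ is included (arbitrarily). Initialize $E^+_T:=E^+$. For every vertex $v$ of in-degree at least $2$ in $(V,E^+)$, let $(u_1,v),\dots,(u_\ell,v)$ be its in-arcs in $E^+$, where $(u_\ell,v)$ has the smallest label; for each $i<\ell$, if $u_i$ has in-degree $0$ in $(V,E^+)$, replace $(u_i,v)$ by $(v,u_i)$ in $E^+_T$, and otherwise remove $(u_i,v)$ from $E^+_T$. Set $\mathcal{T}^+=(V,E^+_T)$. Its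 weakly connected components are called out-trees; a collector is a vertex of in-degree $0$ in $\mathcal{T}^+$. *)

From mathcomp Require Import all_boot.
Set Implicit Arguments. Unset Strict Implicit. Unset Printing Implicit Defensive.

(* A simple temporal clique on the finite vertex set V: the label of the edge
   {x,y} (x != y) is lam x y = lam y x; values on the diagonal are irrelevant. *)
Definition simple_temporal_clique (V : finType) (lam : V -> V -> nat) : Prop :=
  (forall x y, lam x y = lam y x) /\
  (forall x y z, x != y -> x != z -> y != z -> lam x y != lam x z).

(* is_eplus lam v w : the edge {v,w} is e^+(v), the edge incident to v of
   largest label. *)
Definition is_eplus (V : finType) (lam : V -> V -> nat) (v w : V) : bool :=
  (w != v) && [forall u, (u != v) ==> (lam v u <= lam v w)].

(* E : rel V is a valid choice of the arc set E^+ (the only freedom is the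
   arbitrary orientation when e^+(u) = e^+(v) = {u,v}). *)
Definition valid_Eplus (V : finType) (lam : V -> V -> nat) (E : rel V) : Prop :=
  (forall v u, E v u -> is_eplus lam v u) /\
  (forall v u, is_eplus lam v u -> E v u || E u v) /\
  (forall v u, ~~ (E v u && E u v)).

Definition indeg (V : finType) (E : rel V) (v : V) : nat := #|[set u | E u v]|.

Definition min_in_arc (V : finType) (lam : V -> V -> nat) (E : rel V) (u v : V) : bool :=
  [forall w, E w v ==> (lam u v <= lam w v)].

Definition ET (V : finType) (lam : V -> V -> nat) (E : rel V) : rel V :=
  fun x y =>
    (E x y && ((indeg E y < 2) || min_in_arc lam E x y))
    || [&& E y x, 2 <= indeg E x, ~~ min_in_arc lam E y x & indeg E y == 0].

(* same weakly connected component (out-tree) of (V, R) *)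
Definition same_out_tree (V : finType) (R : rel V) (x y : V) : bool :=
  connect (fun a b => R a b || R b a) x y.

Definition collector (V : finType) (R : rel V) (v : V) : bool :=
  [forall u, ~~ R u v].

(* A journey from x along the vertex sequence x :: p (p nonempty, ending at y):
   consecutive vertices distinct (edges of the clique) and strictly increasing
   labels.  Its length is size p and its first edge is {x, head x p}. *)
Definition journey (V : finType) (lam : V -> V -> nat) (x : V) (p : seq V) (y : V) : bool :=
  [&& 0 < size p, last x p == y, path (fun a b => a != b) x p
    & sorted ltn (pairmap lam x p)].

(* A vertex v that is not a collector has an in-arc (u, v) in T+.  If that arc
   is an arc of E+, then {u, v} = e+(u) and u -> v is already a journey.
   Otherwise it is a reversed arc: (v, u) is a non-minimal in-arc of u in E+.
   The minimal in-arc (w, u) is kept in T+, so w, u, v lie in one out-tree,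
   {w, u} = e+(w), and since labels at u are distinct,
   lam(w, u) < lam(v, u) = lam(u, v), making w -> u -> v a journey. *)
From mathcomp Require Import all_boot.

Set Implicit Arguments.
Unset Strict Implicit.

Section Journeys.

Variables (V : finType) (lam : V -> V -> nat).

Lemma journey1 (x y : V) : x != y -> journey lam x [:: y] y.
Proof. by move=> xy; rewrite /journey /= xy eqxx. Qed.

Lemma journey2 (x y z : V) :
  x != y -> y != z -> lam x y < lam y z -> journey lam x [:: y; z] z.
Proof. by move=> xy yz lt_xy_yz; rewrite /journey /= xy yz lt_xy_yz eqxx. Qed.

Lemma eplus_neq (v w : V) : is_eplus lam v w -> w != v.
Proof. by case/andP. Qed.

End Journeys.

Section OutTrees.

Variables (V : finType) (R : rel V).

Lemma same_out_tree_arc (x y : V) : R x y -> same_out_tree R x y.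
Proof. by move=> Rxy; apply: connect1; rewrite Rxy. Qed.

Lemma same_out_tree_trans (x y z : V) :
  same_out_tree R x y -> same_out_tree R y z -> same_out_tree R x z.
Proof. exact: connect_trans. Qed.

End OutTrees.

Section BackwardConstruction.

Variables (V : finType) (lam : V -> V -> nat) (E : rel V).

Lemma ET_min_in_arc (u v : V) : E u v -> min_in_arc lam E u v -> ET lam E u v.
Proof. by move=> Euv minuv; rewrite /ET Euv minuv orbT. Qed.

Lemma ET_cases (u v : V) :
  ET lam E u v -> E u v \/ (E v u /\ ~~ min_in_arc lam E v u).
Proof. by case/orP => [/andP[Euv _] | /and4P[Evu _ nmin _]]; [left | right]. Qed.

Lemma exists_min_in_arc (w v : V) :
  E w v -> exists2 u, E u v & min_in_arc lam E u v.
Proof.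
move=> Ewv; have [u Euv minu] := @arg_minnP V w (E^~ v) (lam^~ v) Ewv.
by exists u => //; apply/forallP => x; apply/implyP => /minu.
Qed.

Lemma min_in_arc_lt (u w v : V) :
  simple_temporal_clique lam -> u != v -> w != v -> u != w ->
  min_in_arc lam E u v -> E w v -> lam u v < lam w v.
Proof.
move=> [lam_sym lam_inj] uv wv uw /forallP/(_ w)/implyP minu Ewv.
rewrite ltn_neqAle minu // andbT lam_sym (lam_sym w).
by apply: lam_inj; rewrite // eq_sym.
Qed.

End BackwardConstruction.

Theorem lemma6 (V : finType) (lam : V -> V -> nat) (E : rel V) :
  simple_temporal_clique lam ->
  valid_Eplus lam E ->
  forall v : V, ~~ collector (ET lam E) v ->
  exists (v' : V) (p : seq V),
    [/\ same_out_tree (ET lam E) v' v,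
        journey lam v' p v,
        size p <= 2
      & is_eplus lam v' (head v' p)].
Proof.
move=> clique [E_eplus _] v; rewrite negb_forall => /existsP[u].
rewrite negbK => ETuv; have tree_uv := same_out_tree_arc ETuv.
case: (ET_cases ETuv) => [Euv | [Evu not_min_vu]].
  have eplus_uv := E_eplus _ _ Euv.
  by exists u, [:: v]; split => //; rewrite journey1 // eq_sym (eplus_neq eplus_uv).
have [w Ewu min_wu] := exists_min_in_arc lam Evu.
have wu : w != u by rewrite eq_sym (eplus_neq (E_eplus _ _ Ewu)).
have vu : v != u by rewrite eq_sym (eplus_neq (E_eplus _ _ Evu)).
have wv : w != v by apply: contraNneq not_min_vu => <-.
exists w, [:: u; v]; split => //; last exact: E_eplus.
- exact: same_out_tree_trans (same_out_tree_arc (ET_min_in_arc Ewu min_wu)) tree_uv.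
- apply: (journey2 wu); first by rewrite eq_sym.
  by rewrite [lam u v]clique.1 (min_in_arc_lt clique wu vu wv min_wu Evu).
Qed.
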